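(* For every $n\ge 3$, the polynomial \[ Q_n(x) = x^{n} - 2(n-1)\sum_{j=1}^{n-1} x^{j} + 1 \] has a unique real root $\lambda_n$ larger than one. Moreover, for $n\ge 4$, \[ 2n-1 - \frac{1}{(2n-1)^{n-2}} < \lambda_n < 2n-1. \] *)

From mathcomp Require Import all_boot all_order all_algebra.
From mathcomp Require Import reals.
Set Implicit Arguments. Unset Strict Implicit. Unset Printing Implicit Defensive.
Import Order.TTheory GRing.Theory Num.Theory.
Local Open Scope ring_scope.

Definition Qpoly (R : nzRingType) (n : nat) : {poly R} :=
  'X^n - ((2 * (n - 1)%N)%:R : R) *: (\sum_(1 <= j < n) 'X^j) + 1.

(* With m = 2n - 1 one has (x - 1) Q_n(x) = x^n (x - m) + m x - 1, so
   Q_n(1) < 0 < Q_n(m) and the intermediate value theorem gives a root in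
   (1, m). It is the only root beyond 1 because Q_n(x) / x^(n-1) is strictly
   increasing there: after clearing denominators the difference splits into
   visibly nonnegative terms. The lower bound follows from
   Q_n(m - m^-(n-2)) < 0, a consequence of Bernoulli's inequality. *)

From mathcomp Require Import all_boot all_order all_algebra.
From mathcomp Require Import reals.
From mathcomp Require Import ring lra zify.
Set Implicit Arguments. Unset Strict Implicit. Unset Printing Implicit Defensive.
Import Order.TTheory GRing.Theory Num.Theory.
Local Open Scope ring_scope.

Lemma ler_expr_swap (R : numDomainType) (x y : R) (j k : nat) :
  0 <= x <= y -> (j <= k)%N -> x ^+ k * y ^+ j <= y ^+ k * x ^+ j.
Proof.
move=> /andP[x0 xy] jk; have y0 := le_trans x0 xy.
rewrite -(subnK jk) !exprD -!mulrA [_ * y ^+ j]mulrC.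
by rewrite ler_wpM2r ?mulr_ge0 ?exprn_ge0 // lerXn2r.
Qed.

Lemma exprB_ge_bernoulli (R : numDomainType) (a e : R) (k : nat) :
  0 <= e <= a -> a ^+ k.+1 - k.+1%:R * e * a ^+ k <= (a - e) ^+ k.+1.
Proof.
move=> /andP[e0 ea]; have a0 := le_trans e0 ea.
elim: k => [|k IH]; first by rewrite !expr1 expr0 mulr1 mul1r.
rewrite [(a - e) ^+ k.+2]exprS; apply: le_trans (ler_wpM2l _ IH); last first.
  by rewrite subr_ge0.
rewrite -subr_ge0.
have -> : (a - e) * (a ^+ k.+1 - k.+1%:R * e * a ^+ k) -
    (a ^+ k.+2 - k.+2%:R * e * a ^+ k.+1) = k.+1%:R * (e * e) * a ^+ k.
  by rewrite !exprS -(addn1 k.+1) natrD; ring.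
by rewrite !mulr_ge0 ?exprn_ge0.
Qed.

Section QpolyRing.
Variable R : comNzRingType.
Implicit Types x : R.

Lemma horner_Qpoly n x : (Qpoly R n).[x] =
  x ^+ n - (2 * (n - 1))%:R * (\sum_(1 <= j < n) x ^+ j) + 1.
Proof.
rewrite /Qpoly !hornerE horner_sum; congr (_ - _ * _ + _).
by apply: eq_bigr => j _; rewrite hornerXn.
Qed.

Lemma mulrB1_sum_expr x n : (0 < n)%N ->
  (x - 1) * (\sum_(1 <= j < n) x ^+ j) = x ^+ n - x.
Proof.
elim: n => // -[_ _|n IH _]; first by rewrite big_geq // mulr0 expr1 subrr.
by rewrite big_nat_recr //= mulrDr IH // [x ^+ n.+2]exprS; ring.
Qed.

Lemma mulrB1_horner_Qpoly x n : (0 < n)%N ->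
  (x - 1) * (Qpoly R n).[x] =
  x ^+ n * (x - (2 * n - 1)%:R) + (2 * n - 1)%:R * x - 1.
Proof.
move=> n0; have -> : (2 * n - 1 = 2 * (n - 1) + 1)%N by lia.
rewrite natrD horner_Qpoly mulrDr mulrBr mulrCA mulrB1_sum_expr //; ring.
Qed.

End QpolyRing.

Section QpolyReal.
Variable R : realFieldType.
Implicit Types x y : R.

Lemma Qpoly_at1_lt0 n : (3 <= n)%N -> (Qpoly R n).[1] < 0.
Proof.
move=> n3; rewrite horner_Qpoly expr1n.
under eq_bigr do rewrite expr1n.
rewrite sumr_const_nat -natrM.
have : (8 : R) <= (2 * (n - 1) * (n - 1))%:R by rewrite ler_nat; nia.
lra.
Qed.

Lemma Qpoly_gt0_at2n1 n : (2 <= n)%N -> 0 < (Qpoly R n).[(2 * n - 1)%:R].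
Proof.
move=> n2; set m : R := (2 * n - 1)%:R.
have m3 : 3 <= m by rewrite /m ler_nat; lia.
have := mulrB1_horner_Qpoly m (ltnW n2); rewrite subrr mulr0 add0r => eq_mQ.
have : 0 < (m - 1) * (Qpoly R n).[m] by rewrite eq_mQ; nra.
by rewrite pmulr_rgt0 // subr_gt0 (lt_le_trans _ m3) // ltr1n.
Qed.

(* The map [x |-> Q_n(x) / x^(n-1)] is strictly increasing on [(1, +oo)]. *)
Lemma Qpoly_cross_lt n x y : (2 <= n)%N -> 1 < x -> x < y ->
  (Qpoly R n).[x] * y ^+ n.-1 < (Qpoly R n).[y] * x ^+ n.-1.
Proof.
case: n => [|[|k]] // _ x1 xy; have y1 := lt_trans x1 xy.
have x0 := lt_trans ltr01 x1; have y0 := lt_trans ltr01 y1.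
rewrite !horner_Qpoly /=; set c : R := (2 * _)%:R.
have c1 : 1 <= c by rewrite /c ler1n muln_gt0.
rewrite !(big_ltn (m:=1)) //.
set Sx := \sum_(2 <= j < k.+2) x ^+ j; set Sy := \sum_(2 <= j < k.+2) y ^+ j.
have Sxy : x ^+ k.+1 * Sy <= y ^+ k.+1 * Sx.
  rewrite /Sx /Sy !mulr_sumr; apply: ler_sum_nat => j /andP[_ jk].
  by apply: ler_expr_swap; rewrite // !ltW.
have xyk : x ^+ k <= y ^+ k by rewrite lerXn2r ?nnegrE ?ltW.
have xk0 : 0 < x ^+ k by rewrite exprn_gt0.
have yk1 : 1 <= y ^+ k by rewrite exprn_ege1 ?ltW.
rewrite -subr_gt0.
have -> : (y ^+ k.+2 - c * (y ^+ 1 + Sy) + 1) * x ^+ k.+1 -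
    (x ^+ k.+2 - c * (x ^+ 1 + Sx) + 1) * y ^+ k.+1 =
  x ^+ k * (x * y * y ^+ k - 1) * (y - x) + (c * x - 1) * y * (y ^+ k - x ^+ k)
  + c * (y ^+ k.+1 * Sx - x ^+ k.+1 * Sy) by rewrite !exprS expr0; ring.
have pos1 : 0 < x ^+ k * (x * y * y ^+ k - 1) * (y - x).
  have xy1 : 1 < x * y by nra.
  by rewrite !mulr_gt0 // subr_gt0; nra.
have pos2 : 0 <= (c * x - 1) * y * (y ^+ k - x ^+ k).
  by rewrite !mulr_ge0 ?subr_ge0 //; nra.
have pos3 : 0 <= c * (y ^+ k.+1 * Sx - x ^+ k.+1 * Sy).
  by rewrite mulr_ge0 ?subr_ge0 //; lra.
lra.
Qed.

Lemma Qpoly_gt0_right n x y : (2 <= n)%N -> 1 < x -> x < y ->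
  0 <= (Qpoly R n).[x] -> 0 < (Qpoly R n).[y].
Proof.
move=> n2 x1 xy Qx0; have x0 := lt_trans ltr01 x1.
have : 0 < (Qpoly R n).[y] * x ^+ n.-1.
  apply: le_lt_trans (Qpoly_cross_lt n2 x1 xy).
  by rewrite mulr_ge0 ?exprn_ge0 // (le_trans _ (ltW xy)) ?ltW.
by rewrite pmulr_lgt0 // exprn_gt0.
Qed.

(* For [L = m - e] with [e = m^-(n-2)], [(L - 1) Q_n(L) = m L - 1 - e L^n], and
   Bernoulli's [L^n >= m^n - n e m^(n-1)] reduces its sign to [(n - 1) m e < 1]. *)
Lemma Qpoly_lt0_below2n1 n : (4 <= n)%N ->
  (Qpoly R n).[(2 * n - 1)%:R - ((2 * n - 1)%:R ^+ (n - 2))^-1] < 0.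
Proof.
case: n => [|[|[|[|k]]]] // _; rewrite [(_ - 2)%N]/=.
set m : R := (2 * k.+4 - 1)%:R; set M := m ^+ k.+2; set e := M^-1.
have m7 : 7 <= m by rewrite /m ler_nat; lia.
have nm : k.+4%:R < m by rewrite /m ltr_nat; lia.
have mmM : m * m <= M.
  rewrite /M !exprS mulrA ler_peMr ?mulr_ge0 ?exprn_ege1 //; lra.
have M0 : 0 < M by apply: lt_le_trans mmM; nra.
have eM : e * M = 1 by rewrite mulVf ?gt_eqF.
have e0 : 0 < e by rewrite invr_gt0.
have e1 : e <= 1 by rewrite invf_le1 //; nra.
set L := m - e; have L1 : 1 < L by rewrite /L; lra.
have bern : m * m - k.+4%:R * e * m <= e * L ^+ k.+4.
  have := ler_wpM2l (ltW e0) (exprB_ge_bernoulli k.+3 (_ : 0 <= e <= m)).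
  have -> : e * (m ^+ k.+4 - k.+4%:R * e * m ^+ k.+3) =
      (m * m - k.+4%:R * e * m) * (e * M) by rewrite /M !exprS; ring.
  by rewrite eM mulr1; apply; apply/andP; split; lra.
have small : (k.+4%:R - 1) * m * e < 1.
  rewrite -[X in _ < X]eM mulrC ltr_pM2l //; apply: lt_le_trans mmM.
  by rewrite ltr_pM2r; lra.
have : (L - 1) * (Qpoly R k.+4).[L] < 0.
  rewrite mulrB1_horner_Qpoly // -/m /L; nra.
by rewrite pmulr_rlt0 // subr_gt0.
Qed.

Section RootComparison.
Variables (n : nat) (lam : R).
Hypotheses (n2 : (2 <= n)%N) (lam1 : 1 < lam) (Qlam : root (Qpoly R n) lam).

Lemma Qpoly_lt0_ltr_root x : 1 < x -> (Qpoly R n).[x] < 0 -> x < lam.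
Proof.
move=> x1 Qx; rewrite ltNge le_eqVlt; apply/negP => /orP[/eqP eq_lam|lam_x].
  by move: Qx; rewrite -eq_lam (rootP Qlam) ltxx.
by move: Qx; rewrite ltNge ltW // (Qpoly_gt0_right n2 lam1 lam_x) ?(rootP Qlam).
Qed.

Lemma Qpoly_gt0_gtr_root x : 1 < x -> 0 < (Qpoly R n).[x] -> lam < x.
Proof.
move=> x1 Qx; rewrite ltNge le_eqVlt; apply/negP => /orP[/eqP eq_x|x_lam].
  by move: Qx; rewrite eq_x (rootP Qlam) ltxx.
by move: (Qpoly_gt0_right n2 x1 x_lam (ltW Qx)); rewrite (rootP Qlam) ltxx.
Qed.

Lemma Qpoly_root_gt1_uniq mu : 1 < mu -> root (Qpoly R n) mu -> mu = lam.
Proof.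
have no_root_right x y : 1 < x -> x < y -> root (Qpoly R n) x ->
    ~~ root (Qpoly R n) y.
  by move=> x1 xy /rootP Qx; rewrite rootE gt_eqF ?(Qpoly_gt0_right n2 x1 xy) ?Qx.
move=> mu1 Qmu; case: (ltgtP mu lam) => // [mu_lam|lam_mu].
  by move: Qlam; rewrite (negbTE (no_root_right _ _ mu1 mu_lam Qmu)).
by move: Qmu; rewrite (negbTE (no_root_right _ _ lam1 lam_mu Qlam)).
Qed.

End RootComparison.

End QpolyReal.

Theorem lemma6p4 (R : realType) (n : nat) (hn : (3 <= n)%N) :
  exists lam : R,
    [/\ 1 < lam, root (Qpoly R n) lam,
        (forall mu : R, 1 < mu -> root (Qpoly R n) mu -> mu = lam) &
        ((4 <= n)%N ->
           (2 * n - 1)%:R - ((2 * n - 1)%:R ^+ (n - 2))^-1 < lam /\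
           lam < (2 * n - 1)%:R)].
Proof.
have n2 := ltnW hn; set m : R := (2 * n - 1)%:R.
have m5 : 5 <= m by rewrite /m ler_nat; lia.
have Q1 := Qpoly_at1_lt0 R hn.
have Qm : 0 < (Qpoly R n).[m] := Qpoly_gt0_at2n1 R n2.
have [lam /andP[lam_ge1 _] Qlam] : exists2 x, 1 <= x <= m & root (Qpoly R n) x.
  by apply: poly_ivt; rewrite ?ltW //; lra.
have lam1 : 1 < lam.
  rewrite lt_neqAle lam_ge1 andbT; apply: contraTneq Q1 => ->.
  by rewrite (rootP Qlam) ltxx.
exists lam; split => // [mu|n4]; first exact: Qpoly_root_gt1_uniq.
have e1 : (m ^+ (n - 2))^-1 <= 1 by rewrite invf_le1 ?exprn_gt0 ?exprn_ege1; lra.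
split; last by apply: (Qpoly_gt0_gtr_root n2 Qlam _ Qm); lra.
by apply: (Qpoly_lt0_ltr_root n2 lam1 Qlam); [lra | exact: Qpoly_lt0_below2n1].
Qed.
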